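(* Let $\mathbf x$ be a $p$-variate random vector with finite second moments and full-rank covariance, let $\mathbf x^{st}=\mathrm{Cov}(\mathbf x)^{-1/2}(\mathbf x-E(\mathbf x))$, and suppose there exist a nonsingular $\mathbf A$ and vector $\mathbf b$ such that $\mathbf z=\mathbf A\mathbf x+\mathbf b=(z_1,\dots,z_p)'$ has mutually independent components with $E(\mathbf z)=\mathbf 0$ and $\mathrm{Cov}(\mathbf z)=\mathbf I_p$. Let $D$ be a squared dispersion measure defined on all linear combinations of $z_1,\dots,z_p$, and let $\mathbf v\in\mathbb{R}^p$ with $\mathbf v'\mathbf v=1$. (1) If $D$ is subadditive, then $D(\mathbf v'\mathbf x^{st})\le\max_j D(z_j)$. (2) If $D$ is superadditive, then $D(\mathbf v'\mathbf x^{st})\ge\min_j D(z_j)$.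
   Context: $\mathrm{Cov}(\mathbf x)^{-1/2}=\mathbf U\mathbf D^{-1/2}\mathbf U'$ where $\mathrm{Cov}(\mathbf x)=\mathbf U\mathbf D\mathbf U'$ is the eigendecomposition. A squared dispersion measure $D$ depends only on the distribution of its argument and satisfies $D(ax+b)=a^2D(x)$ for all real $a,b$, $D\ge0$. It is subadditive if $D(x+y)\le D(x)+D(y)$ for all independent $x,y$, and superadditive if $D(x+y)\ge D(x)+D(y)$ for all independent $x,y$. *)

From HB Require Import structures.
From mathcomp Require Import all_boot all_order all_algebra.
From mathcomp Require Import all_classical all_reals all_analysis.
Set Implicit Arguments. Unset Strict Implicit. Unset Printing Implicit Defensive.
Import Order.TTheory GRing.Theory Num.Theory.

Local Open Scope classical_set_scope.
Local Open Scope ring_scope.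

Section defs.
Context {d : measure_display} {T : measurableType d} {R : realType}.
Variable P : probability T R.

Definition meanvec (p : nat) (x : 'I_p -> T -> R) : 'cV[R]_p :=
  \col_i fine ('E_P[x i]).

Definition covmx (p : nat) (x : 'I_p -> T -> R) : 'M[R]_p :=
  \matrix_(i, j) fine (covariance P (x i) (x j)).

Definition affine_rv (p : nat) (A : 'M[R]_p) (b : 'cV[R]_p)
  (x : 'I_p -> T -> R) : 'I_p -> T -> R :=
  fun i t => \sum_(j < p) A i j * x j t + b i 0.

(* U D^{-1/2} U' for an eigendecomposition U diag(dv) U' *)
Definition inv_sqrt_from_eig (p : nat) (U : 'M[R]_p) (dv : 'rV[R]_p) : 'M[R]_p :=
  U *m diag_mx (\row_i (Num.sqrt (dv 0 i))^-1) *m U^T.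

Definition standardize (p : nat) (S : 'M[R]_p) (x : 'I_p -> T -> R) :
  'I_p -> T -> R :=
  fun i t => \sum_(j < p) S i j * (x j t - meanvec x j 0).

Definition lincomb (p : nat) (v : 'cV[R]_p) (y : 'I_p -> T -> R) : T -> R :=
  fun t => \sum_(i < p) v i 0 * y i t.

Definition mutually_independent (p : nat) (z : 'I_p -> T -> R) : Prop :=
  forall B : 'I_p -> set R, (forall i, measurable (B i)) ->
    P [set t | forall i, B i (z i t)] =
    (\big[*%E/1%E]_(i < p) P (z i @^-1` B i))%E.

Definition independent2 (X Y : T -> R) : Prop :=
  forall A B : set R, measurable A -> measurable B ->
    P (X @^-1` A `&` Y @^-1` B) = (P (X @^-1` A) * P (Y @^-1` B))%E.

Definition same_distribution (X Y : T -> R) : Prop :=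
  forall B : set R, measurable B -> P (X @^-1` B) = P (Y @^-1` B).

Definition lin_span (p : nat) (z : 'I_p -> T -> R) : set (T -> R) :=
  [set X | exists (c : 'I_p -> R) (c0 : R),
      X = (fun t => \sum_(i < p) c i * z i t + c0)].

Definition sq_dispersion (dom : set (T -> R)) (D : (T -> R) -> R) : Prop :=
  [/\ (forall X Y, dom X -> dom Y -> same_distribution X Y -> D X = D Y),
      (forall X (a b : R), dom X -> D (fun t => a * X t + b) = a ^+ 2 * D X)
    & (forall X, dom X -> 0 <= D X)].

Definition disp_subadditive (dom : set (T -> R)) (D : (T -> R) -> R) : Prop :=
  forall X Y, dom X -> dom Y -> independent2 X Y -> D (X \+ Y) <= D X + D Y.

Definition disp_superadditive (dom : set (T -> R)) (D : (T -> R) -> R) : Prop :=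
  forall X Y, dom X -> dom Y -> independent2 X Y -> D X + D Y <= D (X \+ Y).

End defs.

From HB Require Import structures.
From mathcomp Require Import all_boot all_order all_algebra.
From mathcomp Require Import all_classical all_reals all_analysis.
From mathcomp Require Import measurable_realfun.
From mathcomp Require Import ring.
Import Order.TTheory GRing.Theory Num.Theory.
Local Open Scope classical_set_scope.
Local Open Scope ring_scope.

(* Writing x^st = S (x - E x) with S = U D^(-1/2) U', centering gives
   x - E x = A^-1 z, so v' x^st = sum_k w_k z_k with w = v' S A^-1.  Since
   Cov z = A Cov(x) A' = I, Cov(x) = A^-1 A^-T and S Cov(x) S' = I, whence
   w w' = v' v = 1.  Mutual independence makes every partial sum of the
   w_k z_k independent of the next term, so sub- (super-)additivity and
   homogeneity of D give D(sum_k w_k z_k) <= (>=) sum_k w_k^2 D(z_k), a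
   weighted average of the D(z_k), which is bounded by their max (min). *)

Section cylinder_independence.
Context {d : measure_display} {T : measurableType d} {R : realType}.
Context {P : probability T R} {n : nat} {z : 'I_n -> T -> R}.
Hypotheses (z_indep : mutually_independent P z)
  (z_meas : forall i, measurable_fun setT (z i)).

(* The cylinder events of the subfamily (z_i)_(i in J): a pi-system that
   generates the sigma-algebra of that subfamily. *)
Definition cylinder (J : pred 'I_n) : set (set T) :=
  [set E | exists2 C : 'I_n -> set R, (forall i, measurable (C i)) &
     E = [set t | forall i, J i -> C i (z i t)]].

Lemma cylinder_measurable J : cylinder J `<=` measurable.
Proof.
move=> _ [C mC ->].
have -> : [set t | forall i, J i -> C i (z i t)] =
          \bigcap_(i in [set i | J i]) (z i @^-1` C i).
  by apply/seteqP; split => t /= h i; apply: h.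
apply: fin_bigcap_measurable; first exact: finite_finset.
by move=> i _; rewrite -[X in measurable X]setTI; exact: z_meas.
Qed.

Lemma cylinderT J : cylinder J setT.
Proof. by exists (fun=> setT) => //; apply/seteqP; split. Qed.

Lemma cylinderI J : setI_closed (cylinder J).
Proof.
move=> _ _ [C1 mC1 ->] [C2 mC2 ->].
exists (fun i => C1 i `&` C2 i) => [i|]; first exact: measurableI.
apply/seteqP; split => t /=.
  by move=> [h1 h2] i Ji; split; [exact: h1|exact: h2].
by move=> h; split => i Ji; have [] := h i Ji.
Qed.

Lemma cylinder_measurable_fun (J : pred 'I_n) i : J i ->
  measurable_fun (T := g_sigma_algebraType (cylinder J)) setT (z i).
Proof.
move=> Ji _ C mC; rewrite setTI; apply: sub_sigma_algebra.
exists (fun j => if j == i then C else setT) => [j|]; first by case: (j == i).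
apply/seteqP; split => t /=; first by move=> h j Jj; case: eqP => // ->.
by move=> h; have := h i Ji; rewrite eqxx.
Qed.

Lemma rectangle_prob m (F : 'I_n -> set R) : (forall i, measurable (F i)) ->
  P [set t | forall i, F i (z i t)] =
  (P (z m @^-1` F m) * \prod_(i | i != m) P (z i @^-1` F i))%E.
Proof. by move=> mF; rewrite (z_indep _ mF) (bigD1 m). Qed.

Lemma cylinder_indep {J : pred 'I_n} {m B E} : ~~ J m -> measurable B -> cylinder J E ->
  P (E `&` z m @^-1` B) = (P E * P (z m @^-1` B))%E.
Proof.
move=> Jm mB [C mC ->].
pose F Bm i := if i == m then Bm else if J i then C i else setT.
have mF Bm : measurable Bm -> forall i, measurable (F Bm i).
  by move=> mBm i; rewrite /F; case: (i == m) => //; case: (J i).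
have FE Bm : [set t | forall i, J i -> C i (z i t)] `&` z m @^-1` Bm =
             [set t | forall i, F Bm i (z i t)].
  apply/seteqP; split => t /=.
    by move=> [hC hm] i; rewrite /F; case: eqP => [->//|_]; case: ifP => // /hC.
  move=> h; split; last by have := h m; rewrite /F eqxx.
  move=> i Ji; have := h i; rewrite /F Ji.
  by case: eqP => // eim; move: Jm; rewrite -eim Ji.
rewrite FE (rectangle_prob m _ (mF _ mB)).
have := FE setT; rewrite preimage_setT setIT => ->.
rewrite (rectangle_prob m _ (mF _ measurableT)) /F !eqxx preimage_setT.
rewrite probability_setT mul1e muleC; congr (_ * _)%E.
by apply: eq_bigr => i /negbTE im; rewrite im.
Qed.

(* By uniqueness of measures agreeing on a pi-system, the product rule
   extends to the whole sigma-algebra generated by the J-cylinders. *)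
Lemma sigma_cylinder_indep {J : pred 'I_n} {m B E} : ~~ J m -> measurable B ->
  <<s cylinder J >> E -> P (E `&` z m @^-1` B) = (P E * P (z m @^-1` B))%E.
Proof.
move=> Jm mB sE; set Zb := z m @^-1` B.
have mZb : measurable Zb by rewrite -[Zb]setTI; exact: z_meas.
pose r := NngNum (fine_ge0 (measure_ge0 P Zb)).
have PZb : P Zb = (r%:num)%:E by rewrite /= fineK ?fin_num_measure.
have agree E' : cylinder J E' -> P (E' `&` Zb) = (r%:num%:E * P E')%E.
  by move=> cE'; rewrite (cylinder_indep Jm mB cE') PZb muleC.
have finite (k : nat) : (mrestr P mZb setT < +oo)%E.
  by rewrite /mrestr setTI (le_lt_trans (probability_le1 _ _)) ?ltry.
have := @g_sigma_algebra_measure_unique _ _ _ (cylinder J)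
  (@cylinder_measurable J) (fun=> setT) (fun=> cylinderT J)
  (bigcup_const _ (ex_intro _ 0%N I)) (mrestr P mZb) (mscale r P)
  (@cylinderI J) agree finite E sE.
by move=> eqE; rewrite [LHS]eqE PZb muleC.
Qed.

Lemma indep_lincomb_component J m (c : 'I_n -> R) (a : R) : ~~ J m ->
  independent2 P (fun t => \sum_(i < n | J i) c i * z i t) (fun t => a * z m t).
Proof.
move=> Jm A B mA mB.
have mBa : measurable [set r : R | B (a * r)].
  have ma : measurable_fun setT (fun r : R => a * r) by exact: mulrl_measurable.
  by have := ma measurableT _ mB; rewrite setTI.
have mY : measurable_fun (T := g_sigma_algebraType (cylinder J)) setT
    (fun t => \sum_(i < n | J i) c i * z i t).
  under eq_fun do rewrite big_mkcond.
  apply: measurable_sum => i; case: (boolP (J i)) => Ji; last exact: measurable_cst.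
  by apply: measurable_funM; [exact: measurable_cst|exact: cylinder_measurable_fun].
have := mY measurableT _ mA; rewrite setTI => sYA.
exact: sigma_cylinder_indep Jm mBa sYA.
Qed.

End cylinder_independence.

Section affine_combinations.
Context {d : measure_display} {T : measurableType d} {R : realType}.
Context {P : probability T R}.

(* The side condition 1 <= p of the library's closure lemmas for L^p. *)
Let le1_2 : (1 <= 2%:E :> \bar R)%E.
Proof. by rewrite lee_fin ler1n. Qed.

Lemma Lfun2_Lfun1 {f : T -> R} : f \in Lfun P 2%:E -> f \in Lfun P 1.
Proof. by apply: Lfun_subset12; exact: fin_num_measure. Qed.

Lemma Lfun2_lincomb {I : Type} (s : seq I) (X : I -> T -> R) (c : I -> R) :
  (forall j, X j \in Lfun P 2%:E) ->
  (fun t => \sum_(j <- s) c j * X j t) \in Lfun P 2%:E.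
Proof.
move=> X2; have -> : (fun t => \sum_(j <- s) c j * X j t) = \sum_(j <- s) c j *: X j.
  by apply/funext => t; rewrite fct_sumE.
by apply: rpred_sum => // j _; apply: rpredZ.
Qed.

Lemma Lfun2_affine {I : Type} (s : seq I) (X : I -> T -> R) (c : I -> R) (c0 : R) :
  (forall j, X j \in Lfun P 2%:E) ->
  (fun t => \sum_(j <- s) c j * X j t + c0) \in Lfun P 2%:E.
Proof.
move=> X2; rewrite -[fun t => _ + c0]/((fun t => \sum_(j <- s) c j * X j t) + cst c0).
by apply: rpredD => //; [exact: Lfun2_lincomb|exact: Lfun_cst].
Qed.

Lemma Lfun2_scale (a : R) {f : T -> R} : f \in Lfun P 2%:E -> a \o* f \in Lfun P 2%:E.
Proof. by apply: Lfun_scale; rewrite ler1n. Qed.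

Lemma expectation_affine {I : Type} (s : seq I) (X : I -> T -> R) (c : I -> R)
    (c0 : R) : (forall j, X j \in Lfun P 2%:E) ->
  fine 'E_P[fun t => \sum_(j <- s) c j * X j t + c0] =
  \sum_(j <- s) c j * fine 'E_P[X j] + c0.
Proof.
move=> X2; rewrite -[fun t => _ + c0]/((fun t => \sum_(j <- s) c j * X j t) \+ cst c0).
have S1 s' := Lfun2_Lfun1 (Lfun2_lincomb s' X c X2).
rewrite expectationD ?S1 ?Lfun_cst // expectation_cst.
rewrite fineD ?expectation_fin_num ?S1 //=; congr (_ + _).
elim: s => [|j s IH].
  by under eq_fun do rewrite big_nil; rewrite expectation_cst big_nil.
have -> : (fun t => \sum_(i <- j :: s) c i * X i t) =
    (c j \o* X j) \+ (fun t => \sum_(i <- s) c i * X i t).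
  by apply/funext => t; rewrite big_cons /= mulrC.
have cX1 := Lfun2_Lfun1 (Lfun2_scale (c j) (X2 j)).
rewrite expectationD ?S1 // fineD ?expectation_fin_num ?S1 //.
rewrite big_cons IH expectationZl ?Lfun2_Lfun1 //=.
by rewrite fineM ?expectation_fin_num ?Lfun2_Lfun1.
Qed.

Lemma covariance_affine_l {I : Type} (s : seq I) (X : I -> T -> R) (c : I -> R)
    (c0 : R) (Y : T -> R) :
  (forall j, X j \in Lfun P 2%:E) -> Y \in Lfun P 2%:E ->
  fine (covariance P (fun t => \sum_(j <- s) c j * X j t + c0) Y) =
  \sum_(j <- s) c j * fine (covariance P (X j) Y).
Proof.
move=> X2 Y2; rewrite -[fun t => _ + c0]/((fun t => \sum_(j <- s) c j * X j t) \+ cst c0).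
have S2 s' := Lfun2_lincomb s' X c X2.
have cov_fin U V : U \in Lfun P 2%:E -> V \in Lfun P 2%:E -> covariance P U V \is a fin_num.
  move=> U2 V2; apply: covariance_fin_num; last exact: Lfun2_mul_Lfun1.
  - exact: Lfun2_Lfun1.
  - exact: Lfun2_Lfun1.
rewrite covarianceDl ?S2 ?Lfun_cst // covariance_cst_l adde0.
elim: s => [|j s IH].
  by under eq_fun do rewrite big_nil; rewrite big_nil covariance_cst_l.
have -> : (fun t => \sum_(i <- j :: s) c i * X i t) =
    (c j \o* X j) \+ (fun t => \sum_(i <- s) c i * X i t).
  by apply/funext => t; rewrite big_cons /= mulrC.
have cX2 := Lfun2_scale (c j) (X2 j).
rewrite covarianceDl ?S2 // fineD ?cov_fin ?S2 //.
rewrite big_cons IH covarianceZl; last 3 first.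
- exact: Lfun2_Lfun1.
- exact: Lfun2_Lfun1.
- exact: Lfun2_mul_Lfun1.
by rewrite fineM ?cov_fin.
Qed.
End affine_combinations.

Section dispersion_of_combinations.
Context {d : measure_display} {T : measurableType d} {R : realType}.
Context {P : probability T R} {n : nat} {z : 'I_n -> T -> R}.
Hypotheses (z_indep : mutually_independent P z)
  (z_meas : forall i, measurable_fun setT (z i)).
Context {D : (T -> R) -> R}.
Hypothesis D_disp : sq_dispersion P (lin_span z) D.

Lemma lin_span_lincomb (J : pred 'I_n) (c : 'I_n -> R) :
  lin_span z (fun t => \sum_(i < n | J i) c i * z i t).
Proof.
exists (fun i => if J i then c i else 0), 0; apply/funext => t.
rewrite addr0 big_mkcond; apply: eq_bigr => i _.
by case: (J i); rewrite ?mul0r.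
Qed.

Lemma lin_span_scaled (m : 'I_n) (a : R) : lin_span z (fun t => a * z m t).
Proof.
have -> : (fun t => a * z m t) = (fun t => \sum_(i < n | i == m) a * z i t).
  by apply/funext => t; rewrite big_pred1_eq.
exact: lin_span_lincomb.
Qed.

Lemma disp_scaled (m : 'I_n) (a : R) : D (fun t => a * z m t) = a ^+ 2 * D (z m).
Proof.
have [_ D_scale _] := D_disp.
have zm : lin_span z (z m).
  by have := lin_span_scaled m 1; under eq_fun do rewrite mul1r.
by rewrite -(D_scale _ _ 0 zm); congr D; apply/funext => t; rewrite addr0.
Qed.

(* An inequality between D(X + Y) and D(X) + D(Y) for independent X, Y in
   either direction propagates along the partial sums of a combination of the
   independent z_i: compare D(sum_i w_i z_i) with sum_i w_i^2 D(z_i). *)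
Lemma disp_lincomb_cmp (cmp : rel R) (w : 'I_n -> R) :
  reflexive cmp -> transitive cmp ->
  (forall a b c, cmp a b -> cmp (a + c) (b + c)) ->
  (forall X Y, lin_span z X -> lin_span z Y -> independent2 P X Y ->
     cmp (D (X \+ Y)) (D X + D Y)) ->
  cmp (D (fun t => \sum_(i < n) w i * z i t)) (\sum_(i < n) w i ^+ 2 * D (z i)).
Proof.
move=> cmp_refl cmp_trans cmpD Dcmp.
pose S k := fun t => \sum_(i < n | (i < k)%N) w i * z i t.
pose Q k := \sum_(i < n | (i < k)%N) w i ^+ 2 * D (z i).
have [_ D_scale _] := D_disp.
have sum_succ (F : 'I_n -> R) k (kn : (k < n)%N) :
    \sum_(i < n | (i < k.+1)%N) F i = F (Ordinal kn) + \sum_(i < n | (i < k)%N) F i.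
  rewrite (bigD1 (Ordinal kn)) //=; congr (_ + _); apply: eq_bigl => i.
  by rewrite -val_eqE /= ltnS; case: ltngtP => // ->; rewrite eqxx.
suff partial k : (k <= n)%N -> cmp (D (S k)) (Q k).
  have /partial : (n <= n)%N by [].
  by congr cmp; [congr D; apply/funext => t|]; apply: eq_bigl => i; rewrite ltn_ord.
elim: k => [_|k IH kn].
  have S0 : S 0%N = (fun t => 0 * S 0%N t + 0).
    by apply/funext => t; rewrite mul0r addr0 /S big_pred0.
  rewrite S0 D_scale; last exact: lin_span_lincomb.
  by rewrite expr0n mul0r /Q big_pred0.
set m := Ordinal kn.
have -> : S k.+1 = S k \+ (fun t => w m * z m t).
  by apply/funext => t; rewrite /S /= sum_succ addrC.
rewrite /Q sum_succ -/(Q k) addrC.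
apply: (cmp_trans (D (S k) + D (fun t => w m * z m t))).
  apply: Dcmp; [exact: lin_span_lincomb|exact: lin_span_scaled|].
  by apply: indep_lincomb_component => //=; rewrite ltnn.
by rewrite disp_scaled; apply: cmpD; exact: IH (ltnW kn).
Qed.

Lemma disp_lincomb_le (w : 'I_n -> R) : disp_subadditive P (lin_span z) D ->
  D (fun t => \sum_(i < n) w i * z i t) <= \sum_(i < n) w i ^+ 2 * D (z i).
Proof.
move=> D_sub; apply: (@disp_lincomb_cmp (fun a b => a <= b)) => //.
- exact: le_trans.
- by move=> a b c; rewrite lerD2r.
Qed.

Lemma disp_lincomb_ge (w : 'I_n -> R) : disp_superadditive P (lin_span z) D ->
  \sum_(i < n) w i ^+ 2 * D (z i) <= D (fun t => \sum_(i < n) w i * z i t).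
Proof.
move=> D_sup; apply: (@disp_lincomb_cmp (fun a b => b <= a)) => //.
- by move=> b a c ab bc; exact: le_trans bc ab.
- by move=> a b c; rewrite /= lerD2r.
Qed.
End dispersion_of_combinations.

Section whitening.
Context {R : realType}.

Lemma covmx_factor {n} {A C : 'M[R]_n} : A \in unitmx ->
  A *m C *m A^T = 1%:M -> C = invmx A *m (invmx A)^T.
Proof.
move=> A_unit ACA.
have AiA : invmx A *m A = 1%:M by exact: mulVmx.
have AtAit : A^T *m (invmx A)^T = 1%:M by rewrite -trmx_mul AiA trmx1.
transitivity (invmx A *m (A *m C *m A^T) *m (invmx A)^T); last by rewrite ACA mulmx1.
by rewrite !mulmxA AiA mul1mx -mulmxA AtAit mulmx1.
Qed.

Lemma eigval_pos {n} (U B : 'M[R]_n) (dv : 'rV[R]_n) :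
  U^T *m U = 1%:M -> B \in unitmx -> U *m diag_mx dv *m U^T = B *m B^T ->
  forall i, 0 < dv 0 i.
Proof.
move=> UtU B_unit eig i; set M := U^T *m B.
have diagE : diag_mx dv = M *m M^T.
  transitivity (U^T *m (U *m diag_mx dv *m U^T) *m U).
    by rewrite !mulmxA UtU mul1mx -mulmxA UtU mulmx1.
  by rewrite eig /M trmx_mul trmxK !mulmxA.
have M_unit : M \in unitmx.
  by rewrite unitmx_mul B_unit andbT; have [] := mulmx1_unit UtU.
have : diag_mx dv \in unitmx by rewrite diagE unitmx_mul unitmx_tr M_unit.
rewrite unitmxE det_diag unitfE => /prodf_neq0 dv_neq0.
have dvE : dv 0 i = \sum_k M i k ^+ 2.
  have := congr1 (fun X : 'M[R]_n => X i i) diagE.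
  rewrite /= [diag_mx dv i i]mxE eqxx mulr1n => ->; rewrite mxE.
  by apply: eq_bigr => k _; rewrite [M^T k i]mxE expr2.
rewrite lt_def; apply/andP; split; first exact: dv_neq0.
by rewrite dvE; apply: sumr_ge0 => k _; exact: sqr_ge0.
Qed.

Lemma inv_sqrt_whitens {n} (U : 'M[R]_n) (dv : 'rV[R]_n) :
  U^T *m U = 1%:M -> (forall i, 0 < dv 0 i) ->
  let S := inv_sqrt_from_eig U dv in
  S *m (U *m diag_mx dv *m U^T) *m S^T = 1%:M.
Proof.
move=> UtU dv_pos S.
set Dm := diag_mx (\row_i (Num.sqrt (dv 0 i))^-1).
have DdD : Dm *m diag_mx dv *m Dm = 1%:M.
  rewrite /Dm !mulmx_diag; apply/matrixP => i j; rewrite !mxE.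
  case: eqP => _; rewrite ?mulr0n ?mulr1n //.
  have sqrt_pos : 0 < Num.sqrt (dv 0 i) by rewrite sqrtr_gt0.
  rewrite -{2}(sqr_sqrtr (ltW (dv_pos i))).
  by field; exact: lt0r_neq0.
have StE : S^T = S by rewrite /S /inv_sqrt_from_eig !trmx_mul tr_diag_mx trmxK mulmxA.
rewrite StE /S /inv_sqrt_from_eig -/Dm.
transitivity (U *m (Dm *m (U^T *m U) *m diag_mx dv *m (U^T *m U) *m Dm) *m U^T).
  by rewrite !mulmxA.
rewrite UtU !mulmx1 DdD mulmx1.
exact: mulmx1C.
Qed.

Lemma row_sqr_sum {n} (w : 'rV[R]_n) : w *m w^T = 1%:M -> \sum_k w 0 k ^+ 2 = 1.
Proof.
move=> /(congr1 (fun X : 'M[R]_1 => X 0 0)); rewrite /= !mxE eqxx mulr1n => <-.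
by apply: eq_bigr => k _; rewrite mxE expr2.
Qed.

Lemma whitened_weights_norm {n} {C U A : 'M[R]_n} {dv : 'rV[R]_n} {v : 'cV[R]_n} :
  U^T *m U = 1%:M -> C = U *m diag_mx dv *m U^T -> A \in unitmx ->
  A *m C *m A^T = 1%:M -> v^T *m v = 1%:M ->
  \sum_k (v^T *m inv_sqrt_from_eig U dv *m invmx A) 0 k ^+ 2 = 1.
Proof.
move=> UtU eig A_unit ACA vtv; apply: row_sqr_sum.
set S := inv_sqrt_from_eig U dv.
have C_fact := covmx_factor A_unit ACA.
have dv_pos : forall i, 0 < dv 0 i.
  by apply: (eigval_pos _ (invmx A) _ UtU); rewrite ?unitmx_inv // -eig.
have SCS : S *m C *m S^T = 1%:M by rewrite eig; exact: inv_sqrt_whitens.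
rewrite (trmx_mul (v^T *m S)) (trmx_mul v^T) trmxK.
transitivity (v^T *m (S *m (invmx A *m (invmx A)^T) *m S^T) *m v).
  by rewrite !mulmxA.
by rewrite -C_fact SCS mulmx1.
Qed.
End whitening.

Section random_vectors.
Context {d : measure_display} {T : measurableType d} {R : realType}.
Context {P : probability T R} {p : nat} {x : 'I_p -> T -> R}.

Section square_integrable.
Hypothesis x2 : forall i, x i \in Lfun P 2%:E.

Lemma Lfun2_affine_rv (A : 'M[R]_p) (b : 'cV[R]_p) i :
  affine_rv A b x i \in Lfun P 2%:E.
Proof. exact: Lfun2_affine. Qed.

Lemma meanvec_affine (A : 'M[R]_p) (b : 'cV[R]_p) :
  meanvec P (affine_rv A b x) = A *m meanvec P x + b.
Proof.
apply/matrixP => i k; rewrite [k]ord1 !mxE expectation_affine //.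
by congr (_ + _); apply: eq_bigr => j _; rewrite mxE.
Qed.

Lemma covmx_affine (A : 'M[R]_p) (b : 'cV[R]_p) :
  covmx P (affine_rv A b x) = A *m covmx P x *m A^T.
Proof.
apply/matrixP => i k; rewrite mxE covariance_affine_l ?Lfun2_affine_rv //.
under eq_bigr => j _ do rewrite covarianceC covariance_affine_l // mulr_sumr.
rewrite mxE exchange_big /=; apply: eq_bigr => l _.
rewrite mxE mulr_suml; apply: eq_bigr => j _.
by rewrite !mxE covarianceC mulrCA mulrC.
Qed.
End square_integrable.

Lemma lincomb_standardize (S : 'M[R]_p) (v : 'cV[R]_p) {A : 'M[R]_p} {b : 'cV[R]_p} :
  A \in unitmx -> A *m meanvec P x + b = 0 ->
  lincomb v (standardize P S x) =
  (fun t => \sum_k (v^T *m S *m invmx A) 0 k * affine_rv A b x k t).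
Proof.
move=> A_unit Ez0; apply/funext => t.
set xc := \col_j (x j t - meanvec P x j 0).
set zt := \col_k affine_rv A b x k t.
have zE : zt = A *m xc.
  apply/matrixP => k l; rewrite [l]ord1 !mxE /affine_rv.
  have -> : b k 0 = - \sum_j A k j * meanvec P x j 0.
    have := congr1 (fun M : 'cV[R]_p => M k 0) Ez0; rewrite !mxE.
    by move/eqP; rewrite addrC addr_eq0 => /eqP.
  rewrite -sumrN -big_split /=.
  by apply: eq_bigr => j _; rewrite !mxE mulrBr.
transitivity ((v^T *m (S *m xc)) 0 0).
  rewrite /lincomb /standardize mxE; apply: eq_bigr => i _.
  by rewrite !mxE; congr (_ * _); apply: eq_bigr => j _; rewrite !mxE.
rewrite -(mulKmx A_unit xc) -zE !mulmxA mxE.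
by apply: eq_bigr => k _; rewrite [zt _ _]mxE.
Qed.
End random_vectors.

Lemma sqr_weighted_le_bigmax (R : realFieldType) n (w a : 'I_n -> R) (a0 : R) :
  \sum_k w k ^+ 2 = 1 -> \sum_k w k ^+ 2 * a k <= \big[Num.max/a0]_k a k.
Proof.
move=> w1; rewrite -[X in _ <= X]mul1r -w1 mulr_suml.
by apply: ler_sum => k _; rewrite ler_wpM2l ?sqr_ge0 ?le_bigmax.
Qed.

Lemma sqr_weighted_ge_bigmin (R : realFieldType) n (w a : 'I_n -> R) (a0 : R) :
  \sum_k w k ^+ 2 = 1 -> \big[Num.min/a0]_k a k <= \sum_k w k ^+ 2 * a k.
Proof.
move=> w1; rewrite -[X in X <= _]mul1r -w1 mulr_suml.
by apply: ler_sum => k _; rewrite ler_wpM2l ?sqr_ge0 ?bigmin_le.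
Qed.

Theorem theorem5 (d : measure_display) (T : measurableType d) (R : realType)
  (P : probability T R) (p : nat)
  (x : 'I_p.+1 -> T -> R)
  (hx2 : forall i, x i \in Lfun P 2%:E)
  (hfull : covmx P x \in unitmx)
  (U : 'M[R]_p.+1) (dv : 'rV[R]_p.+1)
  (hU : U^T *m U = 1%:M)
  (heig : covmx P x = U *m diag_mx dv *m U^T)
  (A : 'M[R]_p.+1) (b : 'cV[R]_p.+1)
  (hA : A \in unitmx)
  (hind : mutually_independent P (affine_rv A b x))
  (hEz : forall i, ('E_P[affine_rv A b x i] = 0)%E)
  (hcovz : covmx P (affine_rv A b x) = 1%:M)
  (D : (T -> R) -> R)
  (hD : sq_dispersion P (lin_span (affine_rv A b x)) D)
  (v : 'cV[R]_p.+1) (hv : v^T *m v = 1%:M) :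
  let z := affine_rv A b x in
  let xst := standardize P (inv_sqrt_from_eig U dv) x in
  (disp_subadditive P (lin_span z) D ->
     D (lincomb v xst) <= \big[Num.max/D (z ord0)]_(j < p.+1) D (z j)) /\
  (disp_superadditive P (lin_span z) D ->
     \big[Num.min/D (z ord0)]_(j < p.+1) D (z j) <= D (lincomb v xst)).
Proof.
move=> z xst.
have z_meas i : measurable_fun setT (z i).
  by have := sub_Lfun_mfun (Lfun2_affine_rv hx2 A b i); rewrite inE.
have centered : A *m meanvec P x + b = 0.
  by rewrite -meanvec_affine //; apply/matrixP => i k; rewrite !mxE hEz.
have ACA : A *m covmx P x *m A^T = 1%:M by rewrite -(covmx_affine hx2 A b).
set W := v^T *m inv_sqrt_from_eig U dv *m invmx A.
have W_norm : \sum_k W 0 k ^+ 2 = 1 := whitened_weights_norm hU heig hA ACA hv.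
rewrite /xst (lincomb_standardize _ _ hA centered) -/W.
split => [D_sub|D_sup].
- apply: le_trans (disp_lincomb_le hind z_meas hD _ D_sub) _.
  exact: sqr_weighted_le_bigmax.
- apply: le_trans (disp_lincomb_ge hind z_meas hD _ D_sup).
  exact: sqr_weighted_ge_bigmin.
Qed.
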